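(* Let $I$ be a resident-minimal instance and $J$ a simple extension of $I$. Then there is a simple and hospital-complete extension $J'$ of $I$ such that $\mathrm{rej}(J)\subseteq\mathrm{rej}(J')$.
   Context: An instance $I$ consists of finite disjoint sets $R$ (residents) and $H$ (hospitals), a positive integer quota $q_h$ for each $h\in H$, for each $r\in R$ a preference list of $r$ (a sequence of distinct members of $H$, not necessarily all), and for each $h\in H$ a preference list of $h$ (a sequence of distinct members of $R$). A list is complete if it contains every member of the opposite side; an instance is hospital-complete if every hospital's list is complete. A match is a pair $(r,h)\in R\times H$. For a set $M$ of matches, $\mathrm{res}_h M=\{r:(r,h)\in M\}$, $\mathrm{res}\,M=\{r:(r,h)\in M\text{ for some }h\}$. $J$ is an extension of $I$ (same $R,H$, quotas) if every list of $J$ has the corresponding list of $I$ as a prefix. An event is $(r,h)^+$ (proposal) or $(r,h)^-$ (rejection). For an event sequence $\sigma$, $\mathrm{prop}(\sigma)$, $\mathrm{rej}(\sigma)$ are the sets of matches proposed/rejected in $\sigma$ and $\mathrm{tent}(\sigma)=\mathrm{prop}(\sigma)\setminus\mathrm{rej}(\sigma)$. A match $(r,h)\in M$ is ousted from $M$ in $I$ if the list of $h$ in $I$ contains at least $q_h$ residents of $\mathrm{res}_h M$ and either $r$ is not on it or $r$ is preceded on it by at least $q_h$ residents of $\mathrm{res}_h M$. $I$-feasible sequences: the empty sequence is $I$-feasible; if $\sigma$ is $I$-feasible then $\sigma+(r,h)^+$ is $I$-feasible if $r\notin\mathrm{res}\,\mathrm{tent}(\sigma)$, $(r,h)\notin\mathrm{prop}(\sigma)$,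 $h$ is on the list of $r$ in $I$ and $(r,h')\in\mathrm{rej}(\sigma)$ for every $h'$ preceding $h$ on it; and $\sigma+(r,h)^-$ is $I$-feasible if $(r,h)$ is ousted from $\mathrm{prop}(\sigma)$ in $I$ and $(r,h)\notin\mathrm{rej}(\sigma)$. All maximal $I$-feasible sequences contain the same events; $\mathrm{prop}(I),\mathrm{rej}(I)$ denote $\mathrm{prop}(\sigma),\mathrm{rej}(\sigma)$ for any maximal $I$-feasible $\sigma$. $I$ is resident-minimal if $\mathrm{prop}(I)$ equals the set of matches $(r,h)$ with $h$ on the list of $r$ in $I$. An extension $J$ of $I$ is simple if $(\mathrm{prop}(J)\setminus\mathrm{prop}(I))\cap(\mathrm{rej}(J)\setminus\mathrm{rej}(I))=\emptyset$. *)

From mathcomp Require Import all_boot.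
Set Implicit Arguments. Unset Strict Implicit. Unset Printing Implicit Defensive.

Section HR.
Variables (R H : finType).

Record instance := Instance {
  quota : H -> nat;
  quota_pos : forall h, 0 < quota h;
  rlist : R -> seq H;
  rlist_uniq : forall r, uniq (rlist r);
  hlist : H -> seq R;
  hlist_uniq : forall h, uniq (hlist h)
}.

Definition match_t := (R * H)%type.

Definition extension (I J : instance) : Prop :=
  (forall h, quota J h = quota I h) /\
  (forall r, prefix (rlist I r) (rlist J r)) /\
  (forall h, prefix (hlist I h) (hlist J h)).

Definition hospital_complete (I : instance) : Prop :=
  forall h r, r \in hlist I h.

Inductive event := Prop_ev of match_t | Rej_ev of match_t.

Definition is_prop_of (m : match_t) (e : event) : bool :=
  if e is Prop_ev m' then m' == m else false.
Definition is_rej_of (m : match_t) (e : event) : bool :=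
  if e is Rej_ev m' then m' == m else false.

Definition propS (s : seq event) : {set match_t} := [set m | has (is_prop_of m) s].
Definition rejS (s : seq event) : {set match_t} := [set m | has (is_rej_of m) s].
Definition tentS (s : seq event) : {set match_t} := propS s :\: rejS s.

Definition in_res (M : {set match_t}) (r : R) : bool := [exists h, (r, h) \in M].

Definition ousted (I : instance) (M : {set match_t}) (m : match_t) : bool :=
  let: (r, h) := m in
  let L := hlist I h in
  let inM := fun r' => (r', h) \in M in
  (quota I h <= count inM L) &&
  ((r \notin L) || (quota I h <= count inM (take (index r L) L))).

Definition can_propose (I : instance) (s : seq event) (m : match_t) : bool :=
  let: (r, h) := m in
  [&& ~~ in_res (tentS s) r, m \notin propS s, h \in rlist I r &
      all (fun h' => (r, h') \in rejS s) (take (index h (rlist I r)) (rlist I r))].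

Definition can_reject (I : instance) (s : seq event) (m : match_t) : bool :=
  ousted I (propS s) m && (m \notin rejS s).

Definition step_ok (I : instance) (s : seq event) (e : event) : bool :=
  match e with
  | Prop_ev m => can_propose I s m
  | Rej_ev m => can_reject I s m
  end.

Inductive feasible (I : instance) : seq event -> Prop :=
  | feasible_nil : feasible I [::]
  | feasible_rcons s e : feasible I s -> step_ok I s e -> feasible I (rcons s e).

Definition maximal (I : instance) (s : seq event) : Prop :=
  feasible I s /\ forall e, ~ feasible I (rcons s e).

(* prop(I), rej(I): matches proposed/rejected in a maximal I-feasible sequence
   (all maximal sequences contain the same events, so this is well defined). *)
Definition propI (I : instance) (m : match_t) : Prop :=
  exists s, maximal I s /\ m \in propS s.
Definition rejI (I : instance) (m : match_t) : Prop :=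
  exists s, maximal I s /\ m \in rejS s.

Definition resident_minimal (I : instance) : Prop :=
  forall r h, propI I (r, h) <-> h \in rlist I r.

Definition simple_ext (I J : instance) : Prop :=
  extension I J /\
  forall m, ~ ((propI J m /\ ~ propI I m) /\ (rejI J m /\ ~ rejI I m)).

End HR.

(* Fix a maximal J-run sJ in which no resident skips a hospital.  Its rejection set X
   is closed: it contains every match ousted from the set P of matches proposable once
   the matches of X are rejected, and P is exactly its set of proposals; moreover every
   closed set contains all rejections of every run.  J' cuts each resident's J-list
   before the first hospital h such that (r, h) is not in P or is entirely new (h not on
   r's I-list, r not on h's J-list, (r, h) not in X), and appends all missing residents
   to each hospital's J-list.  Every J-rejection is forced in J' as well, since the
   proposals J' drops come from residents absent from the hospital's J-list and do not
   change its counts.  Conversely X, together with the matches (r, h) with r absent from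
   h's J-list and h not filled by P, is closed for J'; so a match proposed and rejected
   in J' but not in I lies in P and X, contradicting the simplicity of J. *)

From mathcomp Require Import all_boot.
From Stdlib Require Import Classical.
Set Implicit Arguments. Unset Strict Implicit. Unset Printing Implicit Defensive.

Lemma take_index_prefix (T : eqType) (l1 l2 : seq T) x :
  prefix l1 l2 -> x \in l1 -> take (index x l2) l2 = take (index x l1) l1.
Proof.
by case/prefixP=> t -> x_l1; rewrite index_cat x_l1 take_cat index_mem x_l1.
Qed.

Lemma mem_prefix (T : eqType) (l1 l2 : seq T) x : prefix l1 l2 -> x \in l1 -> x \in l2.
Proof. by case/prefixP=> t -> x_l1; rewrite mem_cat x_l1. Qed.

Lemma mem_take_find_predC (T : eqType) (k : pred T) (l : seq T) x :
  (forall y z, y \in l -> k y -> z \in take (index y l) l -> k z) ->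
  (x \in take (find (predC k) l) l) = (x \in l) && k x.
Proof.
move=> k_down; apply/idP/andP=> [x_take | [x_l kx]].
  have x_l := mem_take x_take; split=> //.
  by have := before_find x (index_ltn x_take); rewrite nth_index //= => /negbFE.
rewrite in_take // ltnNge; apply/negP=> find_le.
have has_nk : has (predC k) l by rewrite has_find (leq_ltn_trans find_le) ?index_mem.
have /negP := nth_find x has_nk; apply.
move: find_le; rewrite leq_eqVlt => /orP[/eqP-> | find_lt]; first by rewrite nth_index.
apply: (k_down x) => //; rewrite -(nth_take x find_lt) mem_nth // size_take.
by rewrite index_mem x_l.
Qed.

Section Runs.
Variables (R H : finType).
Implicit Types (K : instance R H) (M W : {set match_t R H}) (s : seq (event R H)).

Lemma propS_rcons_Prop s m : propS (rcons s (Prop_ev m)) = m |: propS s.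
Proof. by apply/setP=> x; rewrite !inE has_rcons /= eq_sym. Qed.

Lemma propS_rcons_Rej s m : propS (rcons s (Rej_ev m)) = propS s.
Proof. by apply/setP=> x; rewrite !inE has_rcons. Qed.

Lemma rejS_rcons_Prop s m : rejS (rcons s (Prop_ev m)) = rejS s.
Proof. by apply/setP=> x; rewrite !inE has_rcons. Qed.

Lemma rejS_rcons_Rej s m : rejS (rcons s (Rej_ev m)) = m |: rejS s.
Proof. by apply/setP=> x; rewrite !inE has_rcons /= eq_sym. Qed.

Lemma feasible_rcons_inv K s e : feasible K (rcons s e) -> feasible K s /\ step_ok K s e.
Proof.
move Es: (rcons s e) => t F; case: F Es => [|s' e' F' ok'] Es; first by case: s Es.
by case/rcons_inj: Es => -> ->.
Qed.

Definition proposable K W : {set match_t R H} :=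
  [set m | (m.2 \in rlist K m.1) &&
     all (fun h => (m.1, h) \in W) (take (index m.2 (rlist K m.1)) (rlist K m.1))].

Lemma proposable_mono K W W' : W \subset W' -> proposable K W \subset proposable K W'.
Proof.
move=> /subsetP sWW'; apply/subsetP=> -[r h]; rewrite !inE /= => /andP[-> /allP before].
by apply/allP=> h' /before /sWW'.
Qed.

Lemma proposable_extension I J W : extension I J -> proposable I W \subset proposable J W.
Proof.
case=> _ [ext_r _]; apply/subsetP=> -[r h]; rewrite !inE /= => /andP[h_r before].
by rewrite (mem_prefix (ext_r r) h_r) (take_index_prefix (ext_r r) h_r).
Qed.

Lemma ousted_mono K M M' m : M \subset M' -> ousted K M m -> ousted K M' m.
Proof.
move=> /subsetP sMM'; case: m => r h /=.
have count_le l : count (fun r' => (r', h) \in M) l <= count (fun r' => (r', h) \in M') l.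
  by apply: sub_count => x /sMM'.
case/andP=> filled before; rewrite (leq_trans filled (count_le _)).
by case/orP: before => [-> // | before]; rewrite (leq_trans before (count_le _)) orbT.
Qed.

Lemma ousted_eq_in K M M' r h :
  {in hlist K h, forall y, ((y, h) \in M) = ((y, h) \in M')} ->
  ousted K M (r, h) = ousted K M' (r, h).
Proof.
move=> eqM; rewrite /ousted (eq_in_count eqM).
by rewrite (eq_in_count (sub_in1 (fun y => @mem_take _ _ _ y) eqM)).
Qed.

Lemma ousted_extension K K' M r h :
  quota K' h = quota K h -> prefix (hlist K h) (hlist K' h) ->
  ousted K M (r, h) -> ousted K' M (r, h).
Proof.
rewrite /ousted => -> /prefixP[t ->]; set L := hlist K h; set inM := fun r' => _.
case/andP=> filled before; apply/andP; split.
  by rewrite count_cat (leq_trans filled) ?leq_addr.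
have [r_L | r_nL] := boolP (r \in L).
  by move: before; rewrite r_L mem_cat r_L /= index_cat r_L take_cat index_mem r_L.
apply/orP; right; rewrite index_cat (negbTE r_nL) take_cat ltnNge leq_addr /=.
by rewrite count_cat (leq_trans filled) ?leq_addr.
Qed.

Lemma propS_proposable K s : feasible K s -> propS s \subset proposable K (rejS s).
Proof.
elim=> [|s' e F IH ok]; first by apply/subsetP=> m; rewrite inE.
case: e ok => m ok.
  rewrite propS_rcons_Prop rejS_rcons_Prop subUset IH andbT sub1set.
  by case: m ok => r h /and4P[_ _ h_r before]; rewrite inE /= h_r.
rewrite propS_rcons_Rej rejS_rcons_Rej (subset_trans IH) // proposable_mono //.
exact: subsetUr.
Qed.

Definition rej_closed K W := forall m, ousted K (proposable K W) m -> m \in W.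

Lemma rej_closed_extension I J W : extension I J -> rej_closed J W -> rej_closed I W.
Proof.
move=> IJ W_closed [r h] ousted_I; apply: W_closed; case: (IJ) => eq_q [_ ext_h].
apply: ousted_extension (eq_q h) (ext_h h) _.
exact: ousted_mono (proposable_extension W IJ) ousted_I.
Qed.

Lemma rejS_sub_closed K W s : rej_closed K W -> feasible K s -> rejS s \subset W.
Proof.
move=> W_closed; elim=> [|s' e F IH ok]; first by apply/subsetP=> m; rewrite inE.
case: e ok => m ok; first by rewrite rejS_rcons_Prop.
rewrite rejS_rcons_Rej subUset IH andbT sub1set; apply: W_closed.
case/andP: ok => ousted_m _; apply: ousted_mono ousted_m.
exact: subset_trans (propS_proposable F) (proposable_mono K IH).
Qed.

Lemma rejI_closed K W m : rej_closed K W -> rejI K m -> m \in W.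
Proof. by move=> W_closed [s [[F _] m_s]]; apply: (subsetP (rejS_sub_closed W_closed F)). Qed.

Lemma propI_closed K W m : rej_closed K W -> propI K m -> m \in proposable K W.
Proof.
move=> W_closed [s [[F _] m_s]].
apply: (subsetP (proposable_mono K (rejS_sub_closed W_closed F))).
exact: (subsetP (propS_proposable F)).
Qed.

(* Rejections need not follow proposals, so a resident may skip a hospital whose match
   was rejected unproposed; runs without such skips propose everything proposable. *)
Definition propS_downward K s := forall r h h', (r, h) \in propS s ->
  h' \in take (index h (rlist K r)) (rlist K r) -> (r, h') \in propS s.

Lemma downward_step K s e : step_ok K s e -> propS_downward K s ->
  exists e', step_ok K s e' /\ propS_downward K (rcons s e').
Proof.
case: e => [[r h] | m] ok s_down; last first.
  by exists (Rej_ev m); split=> //; rewrite /propS_downward propS_rcons_Rej.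
case/and4P: (ok) => r_free rh_new h_r before.
set l := rlist K r; pose fresh h' := (r, h') \notin propS s.
have has_fresh : has fresh l by apply/hasP; exists h.
set h0 := nth h l (find fresh l).
have h0_fresh : (r, h0) \notin propS s := nth_find h has_fresh.
have h0_l : h0 \in l by rewrite mem_nth // -has_find.
have h0_index : index h0 l = find fresh l by rewrite index_uniq ?rlist_uniq // -has_find.
have h0_le_h : find fresh l <= index h l.
  by rewrite leqNgt; apply/negP=> /(before_find h); rewrite nth_index //= /fresh rh_new.
have before_h0 h' : h' \in take (index h0 l) l -> (r, h') \in propS s.
  rewrite h0_index => h'_take; have := before_find h (index_ltn h'_take).
  by rewrite nth_index ?(mem_take h'_take) // /fresh => /negbFE.
exists (Prop_ev (r, h0)); split.
  rewrite /= r_free h0_fresh h0_l /=; apply/allP=> h' h'_take; apply: (allP before).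
  by move: h'_take; rewrite h0_index -(take_takel _ h0_le_h); apply: mem_take.
move=> r' h' h''; rewrite propS_rcons_Prop !in_setU1 => /orP[/eqP[-> ->] | rh'_s] h''_take.
  by rewrite before_h0 ?orbT.
by rewrite (s_down _ _ _ rh'_s h''_take) orbT.
Qed.

Lemma card_setC_setU1_lt (T : finType) (A : {set T}) x :
  x \notin A -> #|~: (x |: A)| < #|~: A|.
Proof. by move=> x_nA; apply: proper_card; rewrite properC properUr // sub1set. Qed.

Definition run_measure s := #|~: propS s| + #|~: rejS s|.

Lemma run_measure_step K s e : step_ok K s e -> run_measure (rcons s e) < run_measure s.
Proof.
rewrite /run_measure; case: e => [[r h] | m] /=.
  case/and4P=> _ new _ _.
  by rewrite propS_rcons_Prop rejS_rcons_Prop ltn_add2r card_setC_setU1_lt.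
by case/andP=> _ new; rewrite propS_rcons_Rej rejS_rcons_Rej ltn_add2l card_setC_setU1_lt.
Qed.

Lemma exists_downward_maximal K : exists t, maximal K t /\ propS_downward K t.
Proof.
suff run_from n s : run_measure s < n -> feasible K s -> propS_downward K s ->
    exists t, maximal K t /\ propS_downward K t.
  by apply: (run_from _ [::] (ltnSn _)); [exact: feasible_nil | move=> r h h'; rewrite inE].
elim: n s => [//|n IH] s lt_n F s_down.
case: (classic (exists e, step_ok K s e)) => [[e ok] | stuck].
  have [e' [ok' s_down']] := downward_step ok s_down.
  apply: (IH (rcons s e')) s_down'; last exact: feasible_rcons.
  exact: leq_trans (run_measure_step ok') lt_n.
by exists s; split=> //; split=> // e /feasible_rcons_inv[_ ok]; apply: stuck; exists e.
Qed.

Lemma maximal_proposable_propS K t : maximal K t -> propS_downward K t ->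
  proposable K (rejS t) \subset propS t.
Proof.
case=> F t_max t_down; apply/subsetP=> -[r h]; rewrite inE /= => /andP[h_r before].
apply/negPn/negP=> rh_new.
have [/existsP[h1] | r_free] := boolP (in_res (tentS t) r); last first.
  by apply: (t_max (Prop_ev (r, h))); apply: feasible_rcons; rewrite //= r_free rh_new h_r.
rewrite inE => /andP[rh1_nrej rh1_t].
have := subsetP (propS_proposable F) _ rh1_t; rewrite inE /= => /andP[h1_r before1].
have : index h1 (rlist K r) != index h (rlist K r).
  apply: contraNneq rh_new => eq_index.
  by rewrite -(nth_index h h_r) -eq_index nth_index.
rewrite neq_ltn => /orP[lt1 | lt].
  by move: rh1_nrej; rewrite (allP before) // in_take.
by move: rh_new; rewrite (t_down _ _ _ rh1_t) // in_take.
Qed.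

Lemma maximal_rej_closed K t : maximal K t -> proposable K (rejS t) \subset propS t ->
  rej_closed K (rejS t).
Proof.
case=> F t_max sub m ousted_m; apply/negPn/negP=> m_new.
apply: (t_max (Rej_ev m)); apply: feasible_rcons => //=.
by rewrite /can_reject m_new (ousted_mono sub ousted_m).
Qed.

Lemma canonical_run K : exists t, [/\ maximal K t, rej_closed K (rejS t) &
  proposable K (rejS t) \subset propS t].
Proof.
have [t [t_max t_down]] := exists_downward_maximal K.
have sub := maximal_proposable_propS t_max t_down.
by exists t; split=> //; apply: maximal_rej_closed.
Qed.

Section Truncation.
Variables (I J : instance R H) (sJ : seq (event R H)).
Hypotheses (I_min : resident_minimal I) (IJ : extension I J).
Hypotheses (sJ_max : maximal J sJ) (sJ_closed : rej_closed J (rejS sJ))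
  (sJ_complete : proposable J (rejS sJ) \subset propS sJ).

Local Notation X := (rejS sJ).
Local Notation P := (proposable J X).

Definition kept (r : R) (h : H) : bool :=
  ((r, h) \in P) && [|| h \in rlist I r, r \in hlist J h | (r, h) \in X].

Definition truncated_rlist r := take (find (predC (kept r)) (rlist J r)) (rlist J r).

Definition completed_hlist h := hlist J h ++ [seq r <- enum R | r \notin hlist J h].

Lemma truncated_rlist_uniq r : uniq (truncated_rlist r).
Proof. exact/take_uniq/rlist_uniq. Qed.

Lemma completed_hlist_uniq h : uniq (completed_hlist h).
Proof.
rewrite cat_uniq hlist_uniq filter_uniq ?enum_uniq // andbT /=.
by apply/hasPn=> r; rewrite mem_filter => /andP[].
Qed.

Definition truncation : instance R H :=
  Instance (quota_pos I) truncated_rlist_uniq completed_hlist_uniq.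

Lemma kept_P r h : kept r h -> (r, h) \in P.
Proof. by case/andP. Qed.

Lemma mem_truncated_rlist r h : (h \in truncated_rlist r) = kept r h.
Proof.
rewrite mem_take_find_predC; last first.
  move=> h1 h2 _ /kept_P; rewrite inE /= => /andP[_ /allP before1] h2_take.
  have rh2_X := before1 _ h2_take.
  rewrite /kept rh2_X !orbT andbT inE /= (mem_take h2_take) /=.
  apply/allP=> h3 h3_take; apply: before1.
  by move: h3_take; rewrite -(take_takel _ (ltnW (index_ltn h2_take))); apply: mem_take.
by apply/andb_idl=> /kept_P; rewrite inE => /andP[].
Qed.

Lemma take_index_truncated r h : h \in truncated_rlist r ->
  take (index h (truncated_rlist r)) (truncated_rlist r) =
  take (index h (rlist J r)) (rlist J r).
Proof. by move=> h_tr; rewrite -(take_index_prefix (prefix_take _ _) h_tr). Qed.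

Lemma kept_rlistI r h : h \in rlist I r -> kept r h.
Proof.
move=> h_I; have := propI_closed (rej_closed_extension IJ sJ_closed) ((I_min r h).2 h_I).
by move/(subsetP (proposable_extension X IJ)) => rh_P; rewrite /kept rh_P h_I.
Qed.

Lemma truncation_extension : extension I truncation.
Proof.
case: (IJ) => _ [ext_r ext_h]; split=> //; split=> [r | h] /=; last first.
  exact: prefix_trans (ext_h h) (prefix_prefix _ _).
rewrite /truncated_rlist; case/prefixP: (ext_r r) => t ->; rewrite find_cat.
have -> : has (predC (kept r)) (rlist I r) = false.
  by apply/negbTE/hasPn=> h /kept_rlistI /= ->.
by rewrite take_cat ltnNge leq_addr /= prefix_prefix.
Qed.

Lemma truncation_hospital_complete : hospital_complete truncation.
Proof.
by move=> h r; rewrite /= mem_cat mem_filter mem_enum andbT orbN.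
Qed.

Lemma ousted_kept M r h : M \subset P -> ousted J M (r, h) ->
  ousted J [set m in M | kept m.1 m.2] (r, h).
Proof.
move=> /subsetP sMP; rewrite (ousted_eq_in (M' := M)) // => y y_J.
by rewrite inE /= andb_idr // => yh_M; rewrite /kept sMP //= y_J orbT.
Qed.

Lemma rejS_truncation W s : rej_closed truncation W -> feasible J s -> rejS s \subset W.
Proof.
case: (IJ) => eq_q _ W_closed.
elim=> [|s' e F IH ok]; first by apply/subsetP=> m; rewrite inE.
case: e ok => [m _ | [r h] /andP[ousted_rh _]]; first by rewrite rejS_rcons_Prop.
rewrite rejS_rcons_Rej subUset IH andbT sub1set; apply: W_closed.
have s'_P : propS s' \subset P.
  exact: subset_trans (propS_proposable F) (proposable_mono J (rejS_sub_closed sJ_closed F)).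
have kept_sub : [set m in propS s' | kept m.1 m.2] \subset proposable truncation W.
  apply/subsetP=> -[r' h']; rewrite inE /= => /andP[rh'_s kept_rh'].
  have h'_tr : h' \in truncated_rlist r' by rewrite mem_truncated_rlist.
  rewrite inE /= h'_tr take_index_truncated //.
  have := subsetP (propS_proposable F) _ rh'_s; rewrite inE /= => /andP[_ /allP before].
  by apply/allP=> h'' /before /(subsetP IH).
apply: ousted_mono kept_sub _; apply: ousted_extension (ousted_kept s'_P ousted_rh).
  by rewrite /= eq_q.
exact: prefix_prefix.
Qed.

Lemma rejI_truncation m : rejI J m -> rejI truncation m.
Proof.
case=> s [[F _] m_s]; have [s' [s'_max s'_closed _]] := canonical_run truncation.
by exists s'; split=> //; apply: (subsetP (rejS_truncation s'_closed F)).
Qed.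

Definition unfilled_outsiders : {set match_t R H} :=
  [set m | (m.1 \notin hlist J m.2) &&
     (count (fun r => (r, m.2) \in P) (hlist J m.2) < quota I m.2)].

Lemma truncation_rej_closed : rej_closed truncation (X :|: unfilled_outsiders).
Proof.
case: (IJ) => eq_q _ [r h] ousted_rh.
have sub_P : proposable truncation (X :|: unfilled_outsiders) \subset P.
  by apply/subsetP=> -[r' h']; rewrite inE /= mem_truncated_rlist => /andP[/kept_P].
move: (ousted_mono sub_P ousted_rh); rewrite /ousted /= /completed_hlist in_setU.
case/andP=> filled before.
have [r_J | r_nJ] := boolP (r \in hlist J h).
  apply/orP; left; apply: sJ_closed; move: before.
  rewrite mem_cat r_J /= index_cat r_J take_cat index_mem r_J => before.
  by rewrite eq_q before orbT andbT (leq_trans before) ?leq_count_subseq ?take_subseq.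
have [full | unfilled] := leqP (quota I h) (count (fun r' => (r', h) \in P) (hlist J h)).
  by apply/orP; left; apply: sJ_closed; rewrite /ousted eq_q full r_nJ.
by apply/orP; right; rewrite inE /= r_nJ unfilled.
Qed.

Lemma truncation_simple : simple_ext I J -> simple_ext I truncation.
Proof.
case=> _ J_simple; split; first exact: truncation_extension.
move=> [r h] [[prop' nprop_I] [rej' nrej_I]].
have := propI_closed truncation_rej_closed prop'.
rewrite inE /= mem_truncated_rlist => /andP[kept_rh _].
have h_nI : h \notin rlist I r by apply/negP=> h_I; apply/nprop_I/(I_min r h).
have rh_X : (r, h) \in X.
  have := rejI_closed truncation_rej_closed rej'; rewrite in_setU => /orP[// | ].
  rewrite inE /= => /andP[r_nJ _].
  by case/andP: kept_rh => _; rewrite (negbTE h_nI) (negbTE r_nJ).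
apply: (J_simple (r, h)); split; split=> //.
  by exists sJ; split=> //; apply/(subsetP sJ_complete)/kept_P.
by exists sJ.
Qed.

End Truncation.

End Runs.

Theorem proposition5 (R H : finType) (I J : instance R H) :
  resident_minimal I -> simple_ext I J ->
  exists J' : instance R H,
    simple_ext I J' /\ hospital_complete J' /\
    (forall m, rejI J m -> rejI J' m).
Proof.
move=> I_min [IJ J_simple].
have [sJ [sJ_max sJ_closed sJ_complete]] := canonical_run J.
exists (truncation I J sJ); split; [|split].
- exact: truncation_simple.
- exact: truncation_hospital_complete.
- exact: rejI_truncation.
Qed.
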